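(* Let $A$ be a bialgebra over a commutative ring $\Bbbk$ with coproduct $\Delta_A$ and counit $\varepsilon$. Identify $\mathrm{Ext}^1_A(\Bbbk,\Bbbk)=HH^1(A,\Bbbk)=\mathrm{Der}(A,\Bbbk)$ and $HH^1(A,A)=\mathrm{Der}(A,A)/\{\text{inner derivations}\}$. Then the inclusion of Lie algebras $\mathrm{Ext}^1_A(\Bbbk,\Bbbk)\hookrightarrow HH^1(A,A)$ (the degree $1$ part of the injective morphism of Gerstenhaber algebras $\mathrm{Ext}^*_A(\Bbbk,\Bbbk)\hookrightarrow HH^*(A,A)$ induced by $lift$) is the composite of Lie algebra morphisms $$\mathrm{Der}(A,\Bbbk)\xrightarrow{i}\mathrm{Der}(A,A)\xrightarrow{q}\mathrm{Der}(A,A)/\{\text{inner derivations}\},$$ where $q$ is the quotient map and $i(f)=(A\otimes f)\circ\Delta_A$.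
   Context: A derivation $f:A\to M$ into an $A$-bimodule satisfies $f(ab)=f(a)b+af(b)$; inner derivations are $a\mapsto am-ma$; $\Bbbk$ is an $A$-bimodule via $\varepsilon$. The injective morphism of Gerstenhaber algebras $\mathrm{Ext}^*_A(\Bbbk,\Bbbk)\hookrightarrow HH^*(A,A)$ is induced by $lift:\mathrm{Hom}(A^{\otimes n},\Bbbk)\to\mathrm{Hom}(A^{\otimes n},A)$, $lift(f)(a_1\otimes\dots\otimes a_n)=a_1^{(1)}\cdots a_n^{(1)}f(a_1^{(2)}\otimes\dots\otimes a_n^{(2)})$, where $\mathrm{Ext}^*_A(\Bbbk,\Bbbk)$ carries the Gerstenhaber structure from the operad with multiplication $\mathcal{O}^A(n)=\mathrm{Hom}(A^{\otimes n},\Bbbk)$ with $(f\circ_ig)(a_1\otimes\dots\otimes a_{m+n-1})=f(a_1\otimes\dots\otimes a_{i-1}\otimes a_i^{(1)}\cdots a_{i+n-1}^{(1)}g(a_i^{(2)}\otimes\dots\otimes a_{i+n-1}^{(2)})\otimes a_{i+n}\otimes\dots)$, identity $\varepsilon$, multiplication $\varepsilon\circ\mu$, $e=\mathrm{id}_\Bbbk$, and $HH^*(A,A)$ carries the usual Gerstenhaber structure from the endomorphism operad $\mathrm{Hom}(A^{\otimes n},A)$. On degree $1$ the Gerstenhaber bracket of an operad with multiplication is $\{f,g\}=f\circ_1g-g\circ_1f$. *)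

From HB Require Import structures.
From mathcomp Require Import all_boot all_order all_algebra.
Set Implicit Arguments. Unset Strict Implicit. Unset Printing Implicit Defensive.
Import GRing.Theory.
Local Open Scope ring_scope.

(* Tensors are encoded Sweedler-style: an element of A (x) A is represented by
   a finite list of pairs [(x_i, y_i)] standing for sum_i x_i (x) y_i.  Two such
   representatives are equal in A (x) A iff every R-bilinear map into every
   R-module takes the same value on them (universal property); hence all the
   bialgebra axioms that are equalities of tensors are stated through arbitrary
   multilinear maps into arbitrary R-modules. *)

Section Bialg.
Variables (R : comNzRingType) (A : algType R).

Definition linR (M N : lmodType R) (f : M -> N) : Prop :=
  forall (c : R) x y, f (c *: x + y) = c *: f x + f y.

Definition linS (f : A -> R) : Prop :=
  forall (c : R) x y, f (c *: x + y) = c * f x + f y.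

Definition bilinR (M : lmodType R) (phi : A -> A -> M) : Prop :=
  (forall y, linR (fun x => phi x y)) /\ (forall x, linR (phi x)).

Definition trilinR (M : lmodType R) (phi : A -> A -> A -> M) : Prop :=
  (forall y z, linR (fun x => phi x y z)) /\ (forall x z, linR (fun y => phi x y z))
  /\ (forall x y, linR (phi x y)).

Definition tapp (delta : A -> seq (A * A)) (M : lmodType R) (phi : A -> A -> M) (a : A) : M :=
  \sum_(p <- delta a) phi p.1 p.2.

Record is_bialgebra (delta : A -> seq (A * A)) (eps : A -> R) : Prop := {
  delta_lin : forall (M : lmodType R) (phi : A -> A -> M),
      bilinR phi -> linR (tapp delta phi);
  delta_coassoc : forall (M : lmodType R) (phi : A -> A -> A -> M), trilinR phi ->
      forall a, \sum_(p <- delta a) \sum_(q <- delta p.1) phi q.1 q.2 p.2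
              = \sum_(p <- delta a) \sum_(q <- delta p.2) phi p.1 q.1 q.2;
  eps_lin : linS eps;
  counit_l : forall a, \sum_(p <- delta a) eps p.1 *: p.2 = a;
  counit_r : forall a, \sum_(p <- delta a) eps p.2 *: p.1 = a;
  delta_mul : forall (M : lmodType R) (phi : A -> A -> M), bilinR phi ->
      forall a b, tapp delta phi (a * b)
        = \sum_(p <- delta a) \sum_(q <- delta b) phi (p.1 * q.1) (p.2 * q.2);
  delta_one : forall (M : lmodType R) (phi : A -> A -> M), bilinR phi ->
      tapp delta phi 1 = phi 1 1;
  eps_mul : forall a b, eps (a * b) = eps a * eps b;
  eps_one : eps 1 = 1
}.

Definition is_derk (eps : A -> R) (f : A -> R) : Prop :=
  linS f /\ forall a b, f (a * b) = f a * eps b + eps a * f b.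

Definition is_derA (D : A -> A) : Prop :=
  linR D /\ forall a b, D (a * b) = D a * b + a * D b.

Definition is_inner (D : A -> A) : Prop :=
  exists m : A, forall a, D a = a * m - m * a.

Definition lift_deg1 (delta : A -> seq (A * A)) (f : A -> R) (a : A) : A :=
  \sum_(p <- delta a) p.1 * (f p.2)%:A.

Definition imap (delta : A -> seq (A * A)) (f : A -> R) (a : A) : A :=
  \sum_(p <- delta a) f p.2 *: p.1.

Definition compA1 (delta : A -> seq (A * A)) (f g : A -> R) (a : A) : R :=
  f (\sum_(p <- delta a) p.1 * (g p.2)%:A).

Definition brk (delta : A -> seq (A * A)) (f g : A -> R) (a : A) : R :=
  compA1 delta f g a - compA1 delta g f a.

Definition brA (D E : A -> A) (a : A) : A := D (E a) - E (D a).

End Bialg.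

From mathcomp Require Import all_boot all_order all_algebra.
Import GRing.Theory.
Local Open Scope ring_scope.
Set Implicit Arguments.
Unset Strict Implicit.
Unset Printing Implicit Defensive.

(* For f in Der(A, k), i(f) is a derivation because Delta is multiplicative and
   eps is a counit; coassociativity gives i(f) o i(g) = i(f o_1 g), so i turns the
   bracket of O^A into the commutator.  Finally eps o i(f) = f by the counit law,
   while eps kills every inner derivation a |-> a m - m a since eps is
   multiplicative with values in the commutative ring k; hence q o i is
   injective. *)

Section AlgebraFacts.
Variable R : comNzRingType.

Lemma linR0 (M N : lmodType R) (h : M -> N) : linR h -> h 0 = 0.
Proof. by move=> h_lin; have := h_lin (-1) 0 0; rewrite scaler0 addr0 scaleN1r addNr. Qed.

Lemma linRZ (M N : lmodType R) (h : M -> N) c x : linR h -> h (c *: x) = c *: h x.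
Proof. by move=> h_lin; rewrite -[c *: x]addr0 h_lin linR0 ?addr0. Qed.

Lemma linRD (M N : lmodType R) (h : M -> N) x y : linR h -> h (x + y) = h x + h y.
Proof. by move=> h_lin; have := h_lin 1 x y; rewrite !scale1r. Qed.

Lemma linRB (M N : lmodType R) (h : M -> N) x y : linR h -> h (x - y) = h x - h y.
Proof. by move=> h_lin; rewrite addrC -scaleN1r h_lin scaleN1r addrC. Qed.

Lemma linR_sum (M N : lmodType R) (h : M -> N) I (s : seq I) (F : I -> M) :
  linR h -> h (\sum_(i <- s) F i) = \sum_(i <- s) h (F i).
Proof.
move=> h_lin; elim: s => [|x s IHs]; first by rewrite !big_nil linR0.
by rewrite !big_cons linRD // IHs.
Qed.

Variable A : algType R.

Lemma linS_linR (h : A -> R) : linS h -> linR (h : A -> R^o).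
Proof. by []. Qed.

Lemma linSZ (h : A -> R) c x : linS h -> h (c *: x) = c * h x.
Proof. by move/linS_linR/linRZ. Qed.

Lemma linSB (h : A -> R) x y : linS h -> h (x - y) = h x - h y.
Proof. by move/linS_linR/linRB. Qed.

Lemma linS_sum (h : A -> R) I (s : seq I) (F : I -> A) :
  linS h -> h (\sum_(i <- s) F i) = \sum_(i <- s) h (F i).
Proof. by move/linS_linR/linR_sum. Qed.

Lemma bilinR_scale_by (f : A -> R) : linS f -> bilinR (fun x y : A => f y *: x).
Proof.
move=> f_lin; split=> [y c x z | x c y z]; first by rewrite scalerDr !scalerA mulrC.
by rewrite f_lin scalerDl scalerA.
Qed.

Lemma mulr_scaled_sums I J (s : seq I) (t : seq J) (u : I -> R) (v : J -> R)
    (F : I -> A) (G : J -> A) :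
  (\sum_(i <- s) u i *: F i) * (\sum_(j <- t) v j *: G j)
  = \sum_(i <- s) \sum_(j <- t) (u i * v j) *: (F i * G j).
Proof.
rewrite mulr_suml; apply: eq_bigr => i _; rewrite mulr_sumr; apply: eq_bigr => j _.
by rewrite -scalerAl -scalerAr scalerA.
Qed.

Lemma derA_brA_inner (D E : A -> A) (m : A) :
  is_derA D -> (forall x, E x = x * m - m * x) ->
  forall a, brA D E a = a * D m - D m * a.
Proof.
move=> [D_lin D_mul] Em a; rewrite /brA !Em linRB // !D_mul.
by rewrite opprB addrC !opprD !addrA addrNK [_ + a * D m]addrC addrAC addrK.
Qed.

End AlgebraFacts.

Section LiftDegreeOne.
Variables (R : comNzRingType) (A : algType R).
Variables (delta : A -> seq (A * A)) (eps : A -> R).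
Hypothesis bialgA : is_bialgebra delta eps.

Lemma lift_deg1E (f : A -> R) a : lift_deg1 delta f a = imap delta f a.
Proof. by apply: eq_bigr => p _; rewrite mulr_algr. Qed.

Lemma imap_lin (f : A -> R) : linS f -> linR (imap delta f).
Proof. by move=> f_lin; apply: (delta_lin bialgA (bilinR_scale_by f_lin)). Qed.

Lemma imap_derA (f : A -> R) : is_derk eps f -> is_derA (imap delta f).
Proof.
move=> [f_lin f_mul]; split=> [|a b]; first exact: imap_lin.
rewrite [LHS](delta_mul bialgA (bilinR_scale_by f_lin)).
under eq_bigr => p _ do under eq_bigr => q _ do rewrite f_mul scalerDl.
under eq_bigr => p _ do rewrite big_split.
by rewrite big_split /= -!mulr_scaled_sums !(counit_r bialgA).
Qed.

Lemma imap_comp (h k : A -> R) a : linS h -> linS k ->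
  imap delta h (imap delta k a)
  = \sum_(p <- delta a) \sum_(q <- delta p.2) (h q.1 * k q.2) *: p.1.
Proof.
move=> h_lin k_lin; rewrite [imap delta k a]/imap linR_sum; last exact: imap_lin.
under eq_bigr => p _ do rewrite (linRZ _ _ (imap_lin h_lin)) /imap scaler_sumr.
have trilin : trilinR (fun x y z : A => (h y * k z) *: x).
  split; last split.
  - by move=> y z c x w; rewrite scalerDr !scalerA [c * _]mulrC.
  - by move=> x z c y w; rewrite h_lin !mulrDl scalerDl scalerA mulrA.
  - by move=> x y c z w; rewrite k_lin !mulrDr scalerDl scalerA mulrCA.
rewrite -(delta_coassoc bialgA trilin).
by apply: eq_bigr => p _; apply: eq_bigr => q _; rewrite scalerA mulrC.
Qed.

Lemma imap_brk (f g : A -> R) a : linS f -> linS g ->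
  imap delta (brk delta f g) a = brA (imap delta f) (imap delta g) a.
Proof.
move=> f_lin g_lin; rewrite /brA !imap_comp // /imap -sumrB.
apply: eq_bigr => p _.
rewrite /brk /compA1 -!/(lift_deg1 delta _ _) !lift_deg1E /imap scalerBl.
rewrite !linS_sum // !scaler_suml; congr (_ - _); apply: eq_bigr => q _.
  by rewrite linSZ // (mulrC (g q.2)).
by rewrite linSZ // (mulrC (f q.2)).
Qed.

Lemma counit_imap (f : A -> R) a : linS f -> eps (imap delta f a) = f a.
Proof.
move=> f_lin; rewrite /imap linS_sum; last exact: eps_lin bialgA.
rewrite -{2}(counit_l bialgA a) linS_sum //; apply: eq_bigr => p _.
by rewrite (linSZ _ _ (eps_lin bialgA)) linSZ // mulrC.
Qed.

Lemma counit_inner (E : A -> A) a : is_inner E -> eps (E a) = 0.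
Proof.
move=> [m Em]; rewrite Em (linSB _ _ (eps_lin bialgA)).
by rewrite !(eps_mul bialgA) mulrC subrr.
Qed.

End LiftDegreeOne.

Theorem mainTheorem4 (R : comNzRingType) (A : algType R)
    (delta : A -> seq (A * A)) (eps : A -> R) :
  is_bialgebra delta eps ->
  (* the degree-1 part of lift is i *)
  (forall f, is_derk eps f -> forall a, lift_deg1 delta f a = imap delta f a)
  (* i : Der(A,k) -> Der(A,A) is well defined *)
  /\ (forall f, is_derk eps f -> is_derA (imap delta f))
  (* i is a Lie algebra morphism *)
  /\ (forall f g, is_derk eps f -> is_derk eps g ->
        forall a, imap delta (brk delta f g) a = brA (imap delta f) (imap delta g) a)
  (* inner derivations form a Lie ideal of Der(A,A), so q is a Lie algebra morphism *)
  /\ (forall D E : A -> A, is_derA D -> is_inner E -> is_inner (brA D E))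
  (* q o i is injective *)
  /\ (forall f, is_derk eps f -> is_inner (imap delta f) -> forall a, f a = 0).
Proof.
move=> bialgA; split; first by move=> f _ a; apply: lift_deg1E.
split; first exact: imap_derA.
split.
  by move=> f g [f_lin _] [g_lin _] a; exact: (imap_brk bialgA a f_lin g_lin).
split.
  by move=> D E derD [m Em]; exists (D m); apply: derA_brA_inner.
move=> f [f_lin _] inner_if a.
by rewrite -(counit_imap bialgA a f_lin) (counit_inner bialgA a inner_if).
Qed.
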